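(* Every cutting sequence of a linear trajectory on $S_E$ is infinitely derivable.
   Context: Let $E$ be the regular hexagon of side length $1$, centred at the origin, with two horizontal sides. Its sides are labelled as follows: the two horizontal sides are labelled $A$, the upper-right and lower-left sides are labelled $B$, and the lower-right and upper-left sides are labelled $C$. Gluing opposite parallel sides by translations gives $S_E$ (a flat torus with two marked points, the classes of the vertices). A linear trajectory is a bi-infinite straight line on $S_E$ avoiding the marked points. Its cutting sequence $c(\tau)\in\{A,B,C\}^{\mathbb Z}$ lists, up to shift, the labels of the sides successively crossed. For an ordered triple $(x,y,z)$ of the three distinct letters $A,B,C$, the associated diagram is the directed graph on $\{A,B,C\}$ with exactly the arrows $x\to y$, $y\to x$, $y\to z$, $z\to y$, $z\to z$. The six transition diagrams are those of the following triples: - $\mathscr D_0$: $(A,C,B)$; - $\mathscr D_1$: $(C,A,B)$; - $\mathscr D_2$: $(C,B,A)$; - $\mathscr D_3$: $(B,C,A)$; - $\mathscr D_4$: $(B,A,C)$; - $\mathscr D_5$: $(A,B,C)$. A word $w\in\{A,B,C\}^{\mathbb Z}$ is admissible if, for some $k$, every pair of consecutive letters $w_n\to w_{n+1}$ is an arrow of $\mathscr D_k$. In $w=(w_n)$, the letter $w_n$ is sandwiched if $w_{n-1}=w_{n+1}$. The derived sequence $w'$ of an admissible word $w$ keeps, in order, exactly the sandwiched letters of $w$. The word $w$ is derivable if it is admissible and $w'$ is admissible. The iterated derived sequences are defined by $w^{(0)}=w$ and $w^{(n+1)}=(w^{(n)})'$. The word $w$ is infinitely derivable if $w^{(n)}$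 is derivable for every $n\ge0$. *)

From Stdlib Require Import Reals ZArith.
Open Scope R_scope.

Inductive letter : Type := A | B | C.

Definition triple_arrow (x y z : letter) (a b : letter) : Prop :=
  (a = x /\ b = y) \/ (a = y /\ b = x) \/ (a = y /\ b = z) \/
  (a = z /\ b = y) \/ (a = z /\ b = z).

Definition diagram_triple (k : nat) : letter * letter * letter :=
  match k with
  | 0 => (A, C, B)
  | 1 => (C, A, B)
  | 2 => (C, B, A)
  | 3 => (B, C, A)
  | 4 => (B, A, C)
  | _ => (A, B, C)
  end.

Definition diagram_arrow (k : nat) (a b : letter) : Prop :=
  let '(x, y, z) := diagram_triple k in triple_arrow x y z a b.

Definition word := Z -> letter.

Definition admissible (w : word) : Prop :=
  exists k : nat, (k <= 5)%nat /\ forall n : Z, diagram_arrow k (w n) (w (n + 1)%Z).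

Definition sandwiched (w : word) (n : Z) : Prop := w (n - 1)%Z = w (n + 1)%Z.

(* w' is (a shift of) the derived sequence of w: it lists, in order, exactly
   the sandwiched letters of w, as a bi-infinite word. *)
Definition derived (w w' : word) : Prop :=
  exists sigma : Z -> Z,
    (forall n, (sigma n < sigma (n + 1))%Z) /\
    (forall n, sandwiched w (sigma n)) /\
    (forall m, sandwiched w m -> exists n, sigma n = m) /\
    (forall n, w' n = w (sigma n)).

Definition derivable (w : word) : Prop :=
  admissible w /\ exists w', derived w w' /\ admissible w'.

Inductive iter_derived : nat -> word -> word -> Prop :=
  | iter_derived_0 : forall w, iter_derived 0 w w
  | iter_derived_S : forall n w v u,
      iter_derived n w v -> derived v u -> iter_derived (S n) w u.

Definition infinitely_derivable (w : word) : Prop :=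
  forall n v, iter_derived n w v -> derivable v.

(** * Geometry: the hexagonal tiling of the plane (universal cover of S_E) *)
Definition pt := (R * R)%type.
Definition padd (p q : pt) : pt := (fst p + fst q, snd p + snd q).
Definition psub (p q : pt) : pt := (fst p - fst q, snd p - snd q).
Definition pscale (s : R) (p : pt) : pt := (s * fst p, s * snd p).

Definition hgt : R := sqrt 3 / 2.

Definition V0 : pt := (1, 0).
Definition V1 : pt := (1/2, hgt).
Definition V2 : pt := (-1/2, hgt).
Definition V3 : pt := (-1, 0).
Definition V4 : pt := (-1/2, - hgt).
Definition V5 : pt := (1/2, - hgt).

Definition side (L : letter) (P Q : pt) : Prop :=
  (L = A /\ P = V1 /\ Q = V2) \/ (L = A /\ P = V4 /\ Q = V5) \/
  (L = B /\ P = V0 /\ Q = V1) \/ (L = B /\ P = V3 /\ Q = V4) \/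
  (L = C /\ P = V5 /\ Q = V0) \/ (L = C /\ P = V2 /\ Q = V3).

Definition is_vertex_of_E (P : pt) : Prop :=
  P = V0 \/ P = V1 \/ P = V2 \/ P = V3 \/ P = V4 \/ P = V5.

(* the translation lattice: gluing opposite sides of E; its translates of E
   tile the plane and S_E = R^2 / Lambda *)
Definition lattice_vec (m n : Z) : pt :=
  (3/2 * IZR m, hgt * IZR m + sqrt 3 * IZR n).

(* q is a vertex of the tiling (lift of a marked point of S_E) *)
Definition tiling_vertex (q : pt) : Prop :=
  exists m n P, is_vertex_of_E P /\ q = padd (lattice_vec m n) P.

Definition on_edge (L : letter) (q : pt) : Prop :=
  exists m n P Q s, side L P Q /\ 0 < s < 1 /\
    q = padd (lattice_vec m n) (padd P (pscale s (psub Q P))).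

(** Linear trajectories, lifted to straight lines t |-> p + t v in R^2 *)
Definition traj (p v : pt) (t : R) : pt := padd p (pscale t v).

Definition linear_trajectory (p v : pt) : Prop :=
  v <> (0, 0) /\ forall t, ~ tiling_vertex (traj p v t).

(* w is (a shift of) the cutting sequence: the crossing times with edges are
   enumerated increasingly by tau, and w n is the label of the n-th edge. *)
Definition cutting_sequence (p v : pt) (w : word) : Prop :=
  exists tau : Z -> R,
    (forall n, tau n < tau (n + 1)%Z) /\
    (forall n, on_edge (w n) (traj p v (tau n))) /\
    (forall t L, on_edge L (traj p v t) -> exists n, tau n = t).

From Pilot Require Import Defs.
From Stdlib Require Import Reals ZArith Lra Lia List IndefiniteDescription.
Open Scope R_scope.

(* In the chart (x, y) |-> (2x, y / hgt) the tiling consists of the hexagons with vertices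
   (+-2, 0), (+-1, +-1) centred at (3m, m + 2k).  Follow a line of direction u and, at each
   crossing, the hexagon it leaves and the cross product of u with the crossing point relative
   to that centre.  If k maximises the cross product of u with the vertices, only three sides
   are ever left through, and this coordinate evolves by the exchange of three intervals with
   reversed order, the side being the interval visited.  So a cutting sequence is an injective
   relabelling of an itinerary of such an exchange.  These itineraries are admissible, the
   sandwiched positions recur within 5 steps, and the map induced on them is again a
   three-interval exchange of the same kind, after relabelling; hence derived sequences stay in
   the class and induction on the number of derivations concludes. *)

Lemma increasing_of_succ {T : Type} (lt : T -> T -> Prop)
  (lt_trans : forall x y z, lt x y -> lt y z -> lt x z) (f : Z -> T) :
  (forall n, lt (f n) (f (n + 1)%Z)) -> forall a b, (a < b)%Z -> lt (f a) (f b).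
Proof.
  intros Hs a b Hab.
  replace b with (a + Z.of_nat (S (Z.to_nat (b - a - 1))))%Z by lia.
  induction (Z.to_nat (b - a - 1)) as [|d IH]; [apply Hs|].
  rewrite Nat2Z.inj_succ, <- Z.add_1_r, Z.add_assoc.
  exact (lt_trans _ _ _ IH (Hs _)).
Qed.

Lemma Z_increasing_bracket (sigma : Z -> Z) :
  (forall n, (sigma n < sigma (n + 1))%Z) -> forall m, exists k, (sigma k <= m < sigma (k + 1))%Z.
Proof.
  intros Hs.
  assert (Hup : forall d : nat, exists k, (sigma k <= sigma 0%Z + Z.of_nat d < sigma (k + 1))%Z).
  { induction d as [|d [k Hk]].
    - exists 0%Z; specialize (Hs 0%Z); lia.
    - destruct (Z_lt_le_dec (sigma 0%Z + Z.of_nat (S d)) (sigma (k + 1)%Z)).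
      + exists k; lia.
      + exists (k + 1)%Z; specialize (Hs (k + 1)%Z); lia. }
  assert (Hdown : forall d : nat, exists k, (sigma k <= sigma 0%Z - Z.of_nat d < sigma (k + 1))%Z).
  { induction d as [|d [k Hk]].
    - exists 0%Z; specialize (Hs 0%Z); lia.
    - destruct (Z_le_gt_dec (sigma k) (sigma 0%Z - Z.of_nat (S d))).
      + exists k; lia.
      + exists (k - 1)%Z; specialize (Hs (k - 1)%Z).
        replace (k - 1 + 1)%Z with k in * by lia; lia. }
  intros m; destruct (Z_le_gt_dec (sigma 0%Z) m).
  - destruct (Hup (Z.to_nat (m - sigma 0%Z))) as [k Hk]; exists k.
    rewrite Z2Nat.id in Hk by lia; lia.
  - destruct (Hdown (Z.to_nat (sigma 0%Z - m))) as [k Hk]; exists k.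
    rewrite Z2Nat.id in Hk by lia; lia.
Qed.

Fixpoint first_from (P : Z -> Prop) (dec : forall m, {P m} + {~ P m}) (k : nat) (m : Z) : Z :=
  match k with
  | O => m
  | S k => if dec m then m else first_from P dec k (m + 1)
  end.

Lemma first_from_spec P dec k m :
  (exists j, (0 <= j < Z.of_nat k)%Z /\ P (m + j)%Z) ->
  (m <= first_from P dec k m)%Z /\ P (first_from P dec k m) /\
  forall i, (m <= i < first_from P dec k m)%Z -> ~ P i.
Proof.
  revert m; induction k as [|k IH]; intros m [j [Hj HP]]; [lia|]; simpl.
  destruct (dec m) as [Hm|Hm]; [split; [lia|split; [exact Hm|lia]]|].
  destruct (IH (m + 1)%Z) as (IH1 & IH2 & IH3).
  { assert (j <> 0)%Z by (intros ->; rewrite Z.add_0_r in HP; tauto).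
    exists (j - 1)%Z; split; [lia|]. now replace (m + 1 + (j - 1))%Z with (m + j)%Z by lia. }
  split; [lia|split; [exact IH2|]].
  intros i Hi; destruct (Z.eq_dec i m) as [->|]; [exact Hm|apply IH3; lia].
Qed.

Section BoundedGaps.

Variables (P : Z -> Prop) (dec : forall m, {P m} + {~ P m}) (N : nat).
Hypothesis bounded_gaps : forall n, exists j, (0 <= j < Z.of_nat N)%Z /\ P (n + j)%Z.

Definition next_in (m : Z) : Z := first_from P dec N (m + 1).

(* Searching upwards from [1 - m] in the reflected set [-P]. *)
Definition prev_in (m : Z) : Z :=
  (- first_from (fun i => P (- i)%Z) (fun i => dec (- i)%Z) N (1 - m))%Z.

Lemma next_in_spec m :
  (m < next_in m)%Z /\ P (next_in m) /\ forall i, (m < i < next_in m)%Z -> ~ P i.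
Proof.
  destruct (first_from_spec P dec N (m + 1) (bounded_gaps _)) as (H1 & H2 & H3).
  unfold next_in; split; [lia|split; [exact H2|intros i Hi; apply H3; lia]].
Qed.

Lemma prev_in_spec m :
  (prev_in m < m)%Z /\ P (prev_in m) /\ forall i, (prev_in m < i < m)%Z -> ~ P i.
Proof.
  destruct (first_from_spec (fun i => P (- i)%Z) (fun i => dec (- i)%Z) N (1 - m))
    as (H1 & H2 & H3).
  { destruct (bounded_gaps (m - Z.of_nat N)%Z) as [j [Hj HP]].
    exists (Z.of_nat N - 1 - j)%Z; split; [lia|].
    now replace (- (1 - m + (Z.of_nat N - 1 - j)))%Z with (m - Z.of_nat N + j)%Z by lia. }
  split; [unfold prev_in; lia|split; [exact H2|]].
  intros i Hi; rewrite <- (Z.opp_involutive i); apply H3; unfold prev_in in Hi; lia.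
Qed.

Lemma next_in_prev_in m : P m -> next_in (prev_in m) = m.
Proof.
  intros Hm; destruct (prev_in_spec m) as (H1 & H2 & H3).
  destruct (next_in_spec (prev_in m)) as (H4 & H5 & H6).
  destruct (Z.lt_trichotomy (next_in (prev_in m)) m) as [Hlt|[Heq|Hgt]]; [|exact Heq|].
  - exfalso; exact (H3 _ (conj H4 Hlt) H5).
  - exfalso; exact (H6 _ (conj H1 Hgt) Hm).
Qed.

Definition enum_in (k : Z) : Z :=
  if (0 <=? k)%Z then Nat.iter (Z.to_nat k) next_in (next_in 0)
  else Nat.iter (Z.to_nat (- k)) prev_in (next_in 0).

Lemma enum_in_mem k : P (enum_in k).
Proof.
  assert (Hiter : forall f, (forall m, P (f m)) -> forall d, P (Nat.iter d f (next_in 0%Z)))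
    by (intros f Hf [|d]; [apply next_in_spec|apply Hf]).
  unfold enum_in; destruct (0 <=? k)%Z; apply Hiter; intros m;
    [apply next_in_spec|apply prev_in_spec].
Qed.

Lemma enum_in_succ k : enum_in (k + 1)%Z = next_in (enum_in k).
Proof.
  unfold enum_in; destruct (Z_le_gt_dec 0 k) as [Hk|Hk].
  - rewrite (proj2 (Z.leb_le 0 k) Hk), (proj2 (Z.leb_le 0 (k + 1)) ltac:(lia)).
    now rewrite Z2Nat.inj_add, Nat.add_1_r by lia.
  - rewrite (proj2 (Z.leb_gt 0 k) ltac:(lia)).
    destruct (Z.eq_dec k (-1)) as [->|Hk1]; [symmetry; apply next_in_prev_in, next_in_spec|].
    rewrite (proj2 (Z.leb_gt 0 (k + 1)) ltac:(lia)).
    replace (Z.to_nat (- k)) with (S (Z.to_nat (- (k + 1)))) by lia; simpl.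
    symmetry; apply next_in_prev_in.
    destruct (Z.to_nat (- (k + 1))); [apply next_in_spec|apply prev_in_spec].
Qed.

Lemma bounded_gap_enumeration :
  exists sigma : Z -> Z, (forall n, sigma n < sigma (n + 1))%Z /\ (forall n, P (sigma n)) /\
    (forall m, P m -> exists n, sigma n = m).
Proof.
  assert (Hinc : forall k, (enum_in k < enum_in (k + 1))%Z)
    by (intros k; rewrite enum_in_succ; apply next_in_spec).
  exists enum_in; split; [exact Hinc|split; [exact enum_in_mem|]].
  intros m Hm; destruct (Z_increasing_bracket enum_in Hinc m) as [k Hk]; exists k.
  destruct (Z.eq_dec (enum_in k) m) as [|Hne]; [assumption|exfalso].
  rewrite enum_in_succ in Hk; apply (proj2 (proj2 (next_in_spec (enum_in k))) m); [lia|exact Hm].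
Qed.

End BoundedGaps.

Lemma enumeration_succ (P : Z -> Prop) (sigma : Z -> Z) k j :
  (forall n, sigma n < sigma (n + 1))%Z -> (forall n, P (sigma n)) ->
  (forall m, P m -> exists n, sigma n = m) ->
  (1 <= j)%Z -> P (sigma k + j)%Z -> (forall i, (0 < i < j)%Z -> ~ P (sigma k + i)%Z) ->
  sigma (k + 1)%Z = (sigma k + j)%Z.
Proof.
  intros Hinc HP Honto Hj Hkj Hbetween.
  pose proof (increasing_of_succ Z.lt Z.lt_trans sigma Hinc) as Hmono.
  destruct (Honto _ Hkj) as [t Ht].
  assert (Hkt : (k < t)%Z).
  { destruct (Z_lt_le_dec k t) as [|Htk]; [assumption|].
    destruct (Z.eq_dec t k) as [->|]; [lia|].
    specialize (Hmono t k ltac:(lia)); lia. }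
  assert (Hle : (sigma (k + 1) <= sigma t)%Z).
  { destruct (Z.eq_dec (k + 1) t) as [->|]; [lia|].
    specialize (Hmono (k + 1)%Z t ltac:(lia)); lia. }
  specialize (Hinc k).
  destruct (Z.eq_dec (sigma (k + 1)%Z) (sigma k + j)%Z) as [|Hne]; [assumption|exfalso].
  apply (Hbetween (sigma (k + 1) - sigma k)%Z); [lia|].
  replace (sigma k + (sigma (k + 1) - sigma k))%Z with (sigma (k + 1)%Z) by lia; apply HP.
Qed.

Inductive piece := I1 | I2 | I3.

(* The exchange of (0,a), (a,2a+g), (2a+g,2a+2g) reversing their order; [i] is the
   interval containing [y]. *)
Definition exchange_step (a g : R) (i : piece) (y y' : R) : Prop :=
  match i with
  | I1 => 0 < y < a /\ y' = y + a + 2 * g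
  | I2 => a < y < 2 * a + g /\ y' = y + g - a
  | I3 => 2 * a + g < y < 2 * a + 2 * g /\ y' = y - 2 * a - g
  end.

Definition exchange_orbit (a g : R) (z : Z -> piece) (x : Z -> R) : Prop :=
  0 <= a /\ 0 <= g /\ forall n, exchange_step a g (z n) (x n) (x (n + 1)%Z).

Lemma exchange_step_cases a g i y y' : exchange_step a g i y y' ->
  (i = I1 /\ 0 < y < a /\ y' = y + a + 2 * g) \/
  (i = I2 /\ a < y < 2 * a + g /\ y' = y + g - a) \/
  (i = I3 /\ 2 * a + g < y < 2 * a + 2 * g /\ y' = y - 2 * a - g).
Proof. destruct i; simpl; tauto. Qed.

Lemma exchange_orbit_shift a g z x n : exchange_orbit a g z x ->
  exchange_orbit a g (fun m => z (n + m)%Z) (fun m => x (n + m)%Z).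
Proof.
  intros (Ha & Hg & Hx); split; [|split]; auto.
  intros m; rewrite Z.add_assoc; apply Hx.
Qed.

Definition swap12 i := match i with I1 => I2 | I2 => I1 | I3 => I3 end.
Definition swap23 i := match i with I1 => I1 | I2 => I3 | I3 => I2 end.
Definition swap13 i := match i with I1 => I3 | I2 => I2 | I3 => I1 end.

Lemma exchange_orbit_reflect a g z x : exchange_orbit a g z x ->
  exchange_orbit g a (fun n => swap13 (z n)) (fun n => 2 * a + 2 * g - x n).
Proof.
  intros (Ha & Hg & Hx); split; [|split]; auto.
  intros m; specialize (Hx m); destruct (z m); simpl in *; lra.
Qed.

Definition psandwiched (z : Z -> piece) (m : Z) : Prop := z (m - 1)%Z = z (m + 1)%Z.

Definition next_psandwiched (z : Z -> piece) (n j : Z) : Prop :=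
  psandwiched z (n + j) /\ forall i, (0 < i < j)%Z -> ~ psandwiched z (n + i).

Lemma psandwiched_shift z n m :
  psandwiched (fun k => z (n + k)%Z) m <-> psandwiched z (n + m).
Proof.
  unfold psandwiched.
  now replace (n + (m - 1))%Z with (n + m - 1)%Z by lia;
    replace (n + (m + 1))%Z with (n + m + 1)%Z by lia.
Qed.

Lemma next_psandwiched_shift z n j :
  next_psandwiched (fun k => z (n + k)%Z) 0 j -> next_psandwiched z n j.
Proof.
  intros [Hj Hbetween]; split.
  - now apply psandwiched_shift.
  - intros i Hi Hs; apply (Hbetween i Hi), psandwiched_shift; exact Hs.
Qed.

(* Statements about a few consecutive steps of an orbit are decided by tracing it: each step
   pins the point into one of three intervals and [lra] discards impossible itineraries. *)

Ltac orbit_step Hx k :=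
  let E := fresh "E" in let H1 := fresh "H" in let H2 := fresh "H" in let H3 := fresh "H" in
  destruct (exchange_step_cases _ _ _ _ _ (Hx k))
    as [[E [[H1 H2] H3]]|[[E [[H1 H2] H3]]|[E [[H1 H2] H3]]]];
  simpl in H3; try (exfalso; lra); try (exfalso; congruence).

Ltac rewrite_pieces := repeat match goal with E : ?z ?k = _ |- context [?z ?k] => rewrite E end.

Ltac decide_psandwiched :=
  unfold psandwiched; simpl; rewrite_pieces; first [reflexivity | discriminate].

Ltac next_psandwiched_at j :=
  exists j; split;
  [ split;
    [ decide_psandwiched
    | intros i Hi; assert (Hcases : (i = 1 \/ i = 2 \/ i = 3 \/ i = 4)%Z) by lia;
      destruct Hcases as [->|[->|[->| ->]]]; first [lia | decide_psandwiched] ]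
  | split; [lia | rewrite_pieces; simpl; repeat split; lra] ].

Ltac induced_step :=
  first [ next_psandwiched_at 1%Z | next_psandwiched_at 2%Z | next_psandwiched_at 3%Z
        | next_psandwiched_at 4%Z | next_psandwiched_at 5%Z ].

Ltac induced_by_brute_force :=
  intros z x (Ha & Hg & Hx) Hs; unfold psandwiched in Hs; simpl in Hs;
  orbit_step Hx (-1)%Z; orbit_step Hx 0%Z; orbit_step Hx 1%Z; orbit_step Hx 2%Z;
  orbit_step Hx 3%Z; orbit_step Hx 4%Z; orbit_step Hx 5%Z; orbit_step Hx 6%Z; induced_step.

Definition induced_exchange (a g a' g' : R) (relabel : piece -> piece) (shift : piece -> R) :=
  0 <= a' /\ 0 <= g' /\ (forall i, relabel (relabel i) = i) /\
  forall z x, exchange_orbit a g z x -> psandwiched z 0 ->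
    exists j, next_psandwiched z 0 j /\ (1 <= j)%Z /\
      exchange_step a' g' (relabel (z 0%Z)) (x 0%Z - shift (z 0%Z)) (x j - shift (z j)).

(* The three regimes 3a <= g, 2a <= g <= 3a and a <= g <= 2a give the induced parameters
   (a, g-3a), (3a-g, g-2a) and (2a-g, a); the first return takes at most 5 steps. *)
Lemma induced_exchange_exists a g : 0 <= a <= g ->
  exists a' g' relabel shift, induced_exchange a g a' g' relabel shift.
Proof.
  intros Hag; destruct (Rle_dec (3 * a) g); [|destruct (Rle_dec (2 * a) g)].
  - exists a, (g - 3 * a), swap23,
      (fun i => match i with I1 => 0 | I2 => 4 * a - g | I3 => 2 * a + g end).
    split; [lra|split; [lra|split; [intros []; reflexivity|]]]; induced_by_brute_force.
  - exists (3 * a - g), (g - 2 * a), swap12,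
      (fun i => match i with I1 => g - 3 * a | I2 => g | I3 => 2 * g - a end).
    split; [lra|split; [lra|split; [intros []; reflexivity|]]]; induced_by_brute_force.
  - exists (2 * a - g), a, swap13,
      (fun i => match i with I1 => 2 * g - 5 * a | I2 => 2 * g - 2 * a | I3 => a + 2 * g end).
    split; [lra|split; [lra|split; [intros []; reflexivity|]]]; induced_by_brute_force.
Qed.

Lemma psandwiched_within_5 a g z x : exchange_orbit a g z x -> a <= g ->
  exists j, (0 <= j < 5)%Z /\ psandwiched z j.
Proof.
  intros (Ha & Hg & Hx) Hag.
  orbit_step Hx (-1)%Z; orbit_step Hx 0%Z; orbit_step Hx 1%Z; orbit_step Hx 2%Z;
  orbit_step Hx 3%Z; orbit_step Hx 4%Z; orbit_step Hx 5%Z;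
  first [ exists 0%Z; split; [lia|decide_psandwiched]
        | exists 1%Z; split; [lia|decide_psandwiched]
        | exists 2%Z; split; [lia|decide_psandwiched]
        | exists 3%Z; split; [lia|decide_psandwiched]
        | exists 4%Z; split; [lia|decide_psandwiched] ].
Qed.

Lemma exchange_transitions a g z x n : exchange_orbit a g z x -> a <= g ->
  (z n = I1 /\ z (n + 1)%Z = I3) \/ (z n = I2 /\ z (n + 1)%Z = I2) \/
  (z n = I2 /\ z (n + 1)%Z = I3) \/ (z n = I3 /\ z (n + 1)%Z = I1) \/
  (z n = I3 /\ z (n + 1)%Z = I2).
Proof.
  intros (Ha & Hg & Hx) Hag.
  orbit_step Hx n; orbit_step Hx (n + 1)%Z; tauto.
Qed.

Definition exchange_coded (w : word) : Prop := exists (f : piece -> letter) a g z x,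
  (forall i j, f i = f j -> i = j) /\ exchange_orbit a g z x /\ forall n, w n = f (z n).

Lemma exchange_coded_normal w : exchange_coded w -> exists (f : piece -> letter) a g z x,
  (forall i j, f i = f j -> i = j) /\ exchange_orbit a g z x /\ a <= g /\
  forall n, w n = f (z n).
Proof.
  intros (f & a & g & z & x & Hf & Hx & Hw).
  destruct (Rle_dec a g) as [Hag|Hga].
  - exists f, a, g, z, x; auto.
  - exists (fun i => f (swap13 i)), g, a, (fun n => swap13 (z n)), (fun n => 2 * a + 2 * g - x n).
    split; [|split; [apply exchange_orbit_reflect; exact Hx|split; [lra|]]].
    + intros i j Hij; apply Hf in Hij; destruct i, j; simpl in Hij; congruence.
    + intros n; rewrite Hw; destruct (z n); reflexivity.
Qed.

Lemma diagram_of_triple (x y z : letter) : x <> y -> y <> z -> x <> z ->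
  exists k, (k <= 5)%nat /\ diagram_triple k = (x, y, z).
Proof.
  intros; destruct x, y, z; try congruence;
  first [ exists 0%nat; split; [lia|reflexivity] | exists 1%nat; split; [lia|reflexivity]
        | exists 2%nat; split; [lia|reflexivity] | exists 3%nat; split; [lia|reflexivity]
        | exists 4%nat; split; [lia|reflexivity] | exists 5%nat; split; [lia|reflexivity] ].
Qed.

(* The transitions of an orbit with a <= g are those of the diagram of (f I1, f I3, f I2). *)
Lemma exchange_coded_admissible w : exchange_coded w -> admissible w.
Proof.
  intros Hw; destruct (exchange_coded_normal w Hw) as (f & a & g & z & x & Hf & Hx & Hag & Hfz).
  assert (Hne : forall i j, i <> j -> f i <> f j) by (intros i j Hij E; exact (Hij (Hf _ _ E))).
  destruct (diagram_of_triple (f I1) (f I3) (f I2)) as (k & Hk & Htriple);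
    try (apply Hne; discriminate).
  exists k; split; [exact Hk|]; intros n.
  unfold diagram_arrow; rewrite Htriple; unfold triple_arrow; rewrite !Hfz.
  destruct (exchange_transitions a g z x n Hx Hag)
    as [[-> ->]|[[-> ->]|[[-> ->]|[[-> ->]|[-> ->]]]]]; tauto.
Qed.

Lemma sandwiched_relabel w f z m : (forall i j, f i = f j -> i = j) ->
  (forall n, w n = f (z n)) -> (sandwiched w m <-> psandwiched z m).
Proof.
  intros Hf Hw; unfold sandwiched, psandwiched; rewrite !Hw.
  split; [apply Hf|intros ->; reflexivity].
Qed.

(* The derived word records the itinerary of the induced exchange. *)
Lemma derived_exchange_coded v u : exchange_coded v -> derived v u -> exchange_coded u.
Proof.
  intros Hv (sigma & Hinc & Hsw & Honto & Hu).
  destruct (exchange_coded_normal v Hv) as (f & a & g & z & x & Hf & Hx & Hag & Hfz).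
  destruct (induced_exchange_exists a g) as (a' & g' & rel & shift & Ha' & Hg' & Hrel & Hret).
  { split; [apply Hx|exact Hag]. }
  assert (Hsw' : forall k, psandwiched z (sigma k))
    by (intros k; apply (sandwiched_relabel v f z); auto).
  assert (Honto' : forall m, psandwiched z m -> exists k, sigma k = m)
    by (intros m Hm; apply Honto, (sandwiched_relabel v f z); auto).
  exists (fun i => f (rel i)), a', g', (fun k => rel (z (sigma k))),
    (fun k => x (sigma k) - shift (z (sigma k))).
  split; [|split; [split; [exact Ha'|split; [exact Hg'|]]|]].
  - intros i j Hij; rewrite <- (Hrel i), <- (Hrel j), (Hf _ _ Hij); reflexivity.
  - intros k.
    assert (Hs0 : psandwiched (fun m => z (sigma k + m)%Z) 0)
      by (apply psandwiched_shift; rewrite Z.add_0_r; apply Hsw').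
    destruct (Hret _ _ (exchange_orbit_shift a g z x (sigma k) Hx) Hs0)
      as (j & Hnext & Hj & Hstep).
    destruct (next_psandwiched_shift z (sigma k) j Hnext) as [Hnj Hbetween].
    rewrite (enumeration_succ (psandwiched z) sigma k j Hinc Hsw' Honto' Hj Hnj Hbetween).
    rewrite !Z.add_0_r in Hstep; exact Hstep.
  - intros k; rewrite Hu, Hfz, Hrel; reflexivity.
Qed.

Lemma exchange_coded_derivable w : exchange_coded w -> Defs.derivable w.
Proof.
  intros Hw; split; [apply exchange_coded_admissible; exact Hw|].
  destruct (exchange_coded_normal w Hw) as (f & a & g & z & x & Hf & Hx & Hag & Hfz).
  assert (dec : forall m, {sandwiched w m} + {~ sandwiched w m}).
  { intros m; unfold sandwiched; destruct (w (m - 1)%Z), (w (m + 1)%Z);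
      first [left; reflexivity | right; discriminate]. }
  destruct (bounded_gap_enumeration (sandwiched w) dec 5) as (sigma & Hinc & Hsw & Honto).
  { intros n.
    destruct (psandwiched_within_5 a g _ _ (exchange_orbit_shift a g z x n Hx) Hag)
      as [j [Hj Hs]].
    exists j; split; [exact Hj|].
    apply (sandwiched_relabel w f z); auto; apply psandwiched_shift; exact Hs. }
  assert (Hd : derived w (fun n => w (sigma n))) by (exists sigma; auto).
  exists (fun n => w (sigma n)); split; [exact Hd|].
  apply exchange_coded_admissible, (derived_exchange_coded w); assumption.
Qed.

Lemma exchange_coded_infinitely_derivable w : exchange_coded w -> infinitely_derivable w.
Proof.
  intros Hw n v Hv; apply exchange_coded_derivable.
  induction Hv as [|n w' v u _ IH Hd]; [exact Hw|exact (derived_exchange_coded v u (IH Hw) Hd)].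
Qed.

Lemma hgt_pos : 0 < hgt.
Proof. unfold hgt; pose proof (sqrt_lt_R0 3 ltac:(lra)); lra. Qed.

(* [chart] maps E onto the hexagon with vertices [hvertex j] and [lattice_vec m k] to
   [centre m k]. *)
Definition chart (q : pt) : pt := (2 * fst q, snd q / hgt).
Definition centre (m k : Z) : pt := (3 * IZR m, IZR m + 2 * IZR k).
Definition hvertex (j : nat) : pt :=
  match j with
  | 0 => (2, 0) | 1 => (1, 1) | 2 => (-1, 1) | 3 => (-2, 0) | 4 => (-1, -1) | _ => (1, -1)
  end.
Definition Evertex (j : nat) : pt :=
  match j with 0 => V0 | 1 => V1 | 2 => V2 | 3 => V3 | 4 => V4 | _ => V5 end.

Lemma chart_padd q q' : chart (padd q q') = padd (chart q) (chart q').
Proof. unfold chart, padd; simpl; f_equal; field; apply Rgt_not_eq, hgt_pos. Qed.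

Lemma chart_psub q q' : chart (psub q q') = psub (chart q) (chart q').
Proof. unfold chart, psub; simpl; f_equal; field; apply Rgt_not_eq, hgt_pos. Qed.

Lemma chart_pscale s q : chart (pscale s q) = pscale s (chart q).
Proof. unfold chart, pscale; simpl; f_equal; field; apply Rgt_not_eq, hgt_pos. Qed.

Lemma chart_traj p v t : chart (traj p v t) = traj (chart p) (chart v) t.
Proof. unfold traj; rewrite chart_padd, chart_pscale; reflexivity. Qed.

Lemma chart_lattice_vec m k : chart (lattice_vec m k) = centre m k.
Proof.
  pose proof hgt_pos.
  assert (Hs : sqrt 3 = 2 * hgt) by (unfold hgt; field).
  unfold chart, lattice_vec, centre; simpl; rewrite Hs; f_equal; field; lra.
Qed.

Lemma chart_Evertex j : chart (Evertex j) = hvertex j.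
Proof.
  pose proof hgt_pos.
  destruct j as [|[|[|[|[|j]]]]]; unfold chart; simpl; f_equal; field; lra.
Qed.

Lemma chart_inj q q' : chart q = chart q' -> q = q'.
Proof.
  destruct q as [x y], q' as [x' y']; unfold chart; simpl; intros H; injection H as Hx Hy.
  pose proof hgt_pos; f_equal; [lra|].
  apply (Rmult_eq_reg_r (/ hgt)); [exact Hy|apply Rinv_neq_0_compat; lra].
Qed.

Lemma chart_nonzero v : v <> (0, 0) -> chart v <> (0, 0).
Proof.
  intros Hv E; apply Hv, chart_inj; rewrite E.
  unfold chart; simpl; f_equal; field; pose proof hgt_pos; lra.
Qed.

Ltac Evertices :=
  change V0 with (Evertex 0) in *; change V1 with (Evertex 1) in *;
  change V2 with (Evertex 2) in *; change V3 with (Evertex 3) in *;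
  change V4 with (Evertex 4) in *; change V5 with (Evertex 5) in *.

Inductive edge := E0 | E1 | E2 | E3 | E4 | E5.

(* Side [Ej] of the chart hexagon joins [hvertex j] to [hvertex (j+1)]; the hexagon is
   cut out by [side_form e y <= side_bound e]. *)
Definition side_form (e : edge) (y : pt) : R :=
  match e with
  | E0 => fst y + snd y | E1 => snd y | E2 => snd y - fst y
  | E3 => - fst y - snd y | E4 => - snd y | E5 => fst y - snd y
  end.

Definition side_bound (e : edge) : R :=
  match e with E0 | E2 | E3 | E5 => 2 | E1 | E4 => 1 end.

Definition on_side (e : edge) (y : pt) : Prop :=
  match e with
  | E0 => fst y + snd y = 2 /\ 0 < snd y < 1
  | E1 => snd y = 1 /\ -1 < fst y < 1
  | E2 => snd y - fst y = 2 /\ 0 < snd y < 1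
  | E3 => fst y + snd y = -2 /\ -1 < snd y < 0
  | E4 => snd y = -1 /\ -1 < fst y < 1
  | E5 => fst y - snd y = 2 /\ -1 < snd y < 0
  end.

Definition side_label (e : edge) : letter :=
  match e with E0 | E3 => Defs.B | E1 | E4 => Defs.A | E2 | E5 => Defs.C end.

Definition opp_side (e : edge) : edge :=
  match e with E0 => E3 | E1 => E4 | E2 => E5 | E3 => E0 | E4 => E1 | E5 => E2 end.

(* The hexagon adjacent along side [e] has centre [centre (neighbour_m e) (neighbour_k e)]. *)
Definition neighbour_m (e : edge) : Z :=
  match e with E0 => 1 | E1 => 0 | E2 => -1 | E3 => -1 | E4 => 0 | E5 => 1 end.
Definition neighbour_k (e : edge) : Z :=
  match e with E0 => 0 | E1 => 1 | E2 => 1 | E3 => 0 | E4 => -1 | E5 => -1 end.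

Definition in_hexagon (y : pt) : Prop := forall e, side_form e y <= side_bound e.
Definition hexagon_vertex (y : pt) : Prop := exists j, (j <= 5)%nat /\ y = hvertex j.

Definition edge_eq_dec (e e' : edge) : {e = e'} + {e <> e'}.
Proof. decide equality. Defined.

Definition all_edges : list edge := E0 :: E1 :: E2 :: E3 :: E4 :: E5 :: nil.

Lemma in_all_edges e : In e all_edges.
Proof. destruct e; simpl; tauto. Qed.

Lemma side_form_opp e y : side_form (opp_side e) y = - side_form e y.
Proof. destruct e; simpl; ring. Qed.

Lemma side_label_opp e : side_label (opp_side e) = side_label e.
Proof. destruct e; reflexivity. Qed.

Lemma side_form_traj e P V c t :
  side_form e (psub (traj P V t) c) = side_form e (psub P c) + side_form e V * t.
Proof. destruct e; unfold psub, traj, padd, pscale; simpl; ring. Qed.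

Lemma psub_centre y m k m' k' :
  psub (psub y (centre m k)) (centre m' k') = psub y (centre (m + m') (k + k')).
Proof. unfold psub, centre; simpl; rewrite !plus_IZR; f_equal; ring. Qed.

Lemma on_side_tight e y : on_side e y ->
  side_form e y = side_bound e /\ forall e', e' <> e -> side_form e' y < side_bound e'.
Proof.
  destruct y as [y1 y2]; destruct e; simpl; intros H; split; try lra;
    intros e' He; destruct e'; simpl; try lra; congruence.
Qed.

Lemma on_side_in_hexagon e y : on_side e y -> in_hexagon y.
Proof.
  intros H e'; destruct (on_side_tight e y H) as [H1 H2].
  destruct (edge_eq_dec e' e) as [->|]; [lra|apply Rlt_le, H2; assumption].
Qed.

Lemma on_side_neighbour e y : on_side e y ->
  on_side (opp_side e) (psub y (centre (neighbour_m e) (neighbour_k e))).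
Proof. destruct y as [y1 y2]; destruct e; unfold psub, centre; simpl; intros; lra. Qed.

Ltac in_hexagon_facts H :=
  pose proof (H E0); pose proof (H E1); pose proof (H E2);
  pose proof (H E3); pose proof (H E4); pose proof (H E5); simpl in *.

Lemma hexagon_boundary_cases y : in_hexagon y -> (exists e, side_form e y = side_bound e) ->
  (exists e, on_side e y) \/ hexagon_vertex y.
Proof.
  destruct y as [y1 y2]; intros H [e He]; in_hexagon_facts H; unfold hexagon_vertex.
  destruct e; simpl in He;
  destruct (Req_dec y2 0), (Req_dec y2 1), (Req_dec y2 (-1)), (Req_dec y1 1), (Req_dec y1 (-1));
  first [ left; exists E0; simpl; lra | left; exists E1; simpl; lra | left; exists E2; simpl; lra
        | left; exists E3; simpl; lra | left; exists E4; simpl; lra | left; exists E5; simpl; lra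
        | right; exists 0%nat; split; [lia|simpl; f_equal; lra]
        | right; exists 1%nat; split; [lia|simpl; f_equal; lra]
        | right; exists 2%nat; split; [lia|simpl; f_equal; lra]
        | right; exists 3%nat; split; [lia|simpl; f_equal; lra]
        | right; exists 4%nat; split; [lia|simpl; f_equal; lra]
        | right; exists 5%nat; split; [lia|simpl; f_equal; lra] ].
Qed.

Lemma hexagon_overlap e y m k : on_side e y -> in_hexagon (psub y (centre m k)) ->
  (m = 0 /\ k = 0)%Z \/ (m = neighbour_m e /\ k = neighbour_k e).
Proof.
  intros He Hi; pose proof (on_side_in_hexagon e y He) as Hy.
  destruct y as [y1 y2]; in_hexagon_facts Hy; in_hexagon_facts Hi;
    unfold psub, centre in *; simpl in *.
  assert (m < 2 /\ -2 < m /\ k < 2 /\ -2 < k)%Z as Hb by (repeat split; apply lt_IZR; lra).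
  assert (m = -1 \/ m = 0 \/ m = 1)%Z as Hm by lia.
  assert (k = -1 \/ k = 0 \/ k = 1)%Z as Hk by lia.
  destruct Hm as [->|[->| ->]], Hk as [->|[->| ->]]; destruct e; simpl in *;
    first [left; split; reflexivity | right; split; reflexivity | exfalso; lra].
Qed.

Lemma on_edge_chart L q : on_edge L q ->
  exists m k e, side_label e = L /\ on_side e (psub (chart q) (centre m k)).
Proof.
  intros (m & k & P & Q & s & Hs & Hs01 & ->).
  rewrite !chart_padd, chart_pscale, chart_psub, chart_lattice_vec.
  destruct Hs as [[-> [-> ->]]|[[-> [-> ->]]|[[-> [-> ->]]|[[-> [-> ->]]|[[-> [-> ->]]|[-> [-> ->]]]]]]];
  Evertices; rewrite !chart_Evertex; exists m, k;
  unfold psub, padd, pscale, centre; simpl;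
  first [ exists E0; split; [reflexivity|simpl; lra] | exists E1; split; [reflexivity|simpl; lra]
        | exists E2; split; [reflexivity|simpl; lra] | exists E3; split; [reflexivity|simpl; lra]
        | exists E4; split; [reflexivity|simpl; lra] | exists E5; split; [reflexivity|simpl; lra] ].
Qed.

Lemma on_edge_of_chart e q m k : on_side e (psub (chart q) (centre m k)) ->
  on_edge (side_label e) q.
Proof.
  intros H; destruct (chart q) as [h1 h2] eqn:Eh; unfold psub, centre in H; simpl in H.
  exists m, k.
  destruct e; simpl in H;
  [ exists V0, V1, (h2 - (IZR m + 2 * IZR k))
  | exists V1, V2, ((1 - (h1 - 3 * IZR m)) / 2)
  | exists V2, V3, (1 - (h2 - (IZR m + 2 * IZR k)))
  | exists V3, V4, (- (h2 - (IZR m + 2 * IZR k)))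
  | exists V4, V5, (((h1 - 3 * IZR m) + 1) / 2)
  | exists V5, V0, ((h2 - (IZR m + 2 * IZR k)) + 1) ];
  (split; [unfold side; simpl; tauto|split; [lra|]]);
  apply chart_inj; rewrite !chart_padd, chart_pscale, chart_psub, chart_lattice_vec, Eh;
  Evertices; rewrite !chart_Evertex;
  unfold psub, padd, pscale, centre; simpl; f_equal; lra.
Qed.

Lemma tiling_vertex_of_chart q m k : hexagon_vertex (psub (chart q) (centre m k)) ->
  tiling_vertex q.
Proof.
  intros (j & Hj & H); exists m, k, (Evertex j); split.
  - unfold is_vertex_of_E; destruct j as [|[|[|[|[|[|j]]]]]]; simpl; tauto || lia.
  - apply chart_inj; rewrite chart_padd, chart_lattice_vec, chart_Evertex, <- H.
    destruct (chart q); unfold psub, padd; simpl; f_equal; ring.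
Qed.

Lemma parallel_to_side_hits_vertex e y V : on_side e y -> side_form e V = 0 -> V <> (0, 0) ->
  exists s, hexagon_vertex (padd y (pscale s V)).
Proof.
  destruct y as [y1 y2], V as [a b]; intros H HV HV0.
  assert (Hab : b <> 0 \/ a <> 0)
    by (destruct (Req_dec b 0); [right; intros ->; subst; apply HV0; reflexivity|left; auto]).
  unfold hexagon_vertex, padd, pscale; simpl.
  destruct e; simpl in H, HV.
  - assert (b <> 0) by (destruct Hab; auto; lra).
    exists (- y2 / b), 0%nat; split; [lia|]; simpl.
    assert (Es : - y2 / b * b = - y2) by (field; auto). f_equal; nra.
  - assert (a <> 0) by (destruct Hab; [lra|auto]).
    exists ((1 - y1) / a), 1%nat; split; [lia|]; simpl.
    assert (Es : (1 - y1) / a * a = 1 - y1) by (field; auto). f_equal; nra.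
  - assert (b <> 0) by (destruct Hab; auto; lra).
    exists ((1 - y2) / b), 2%nat; split; [lia|]; simpl.
    assert (Es : (1 - y2) / b * b = 1 - y2) by (field; auto). f_equal; nra.
  - assert (b <> 0) by (destruct Hab; auto; lra).
    exists (- y2 / b), 3%nat; split; [lia|]; simpl.
    assert (Es : - y2 / b * b = - y2) by (field; auto). f_equal; nra.
  - assert (a <> 0) by (destruct Hab; [lra|auto]).
    exists ((-1 - y1) / a), 4%nat; split; [lia|]; simpl.
    assert (Es : (-1 - y1) / a * a = -1 - y1) by (field; auto). f_equal; nra.
  - assert (b <> 0) by (destruct Hab; auto; lra).
    exists ((-1 - y2) / b), 5%nat; split; [lia|]; simpl.
    assert (Es : (-1 - y2) / b * b = -1 - y2) by (field; auto). f_equal; nra.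
Qed.

Lemma first_zero_affine {I : Type} (l : list I) (A B : I -> R) t0 t1 : t0 < t1 ->
  (forall i, In i l -> A i + B i * t0 < 0 \/ (A i + B i * t0 <= 0 /\ B i < 0)) ->
  exists ts, t0 < ts <= t1 /\ (forall i, In i l -> A i + B i * ts <= 0) /\
    (forall s, t0 < s < ts -> forall i, In i l -> A i + B i * s < 0) /\
    (ts = t1 \/ exists i, In i l /\ A i + B i * ts = 0).
Proof.
  intros Ht; induction l as [|a l IH]; intros H0.
  - exists t1; split; [lra|split; [intros i []|split; [intros s Hs i []|left; reflexivity]]].
  - destruct IH as [ts' [Hts' [Hle [Hlt Hdis]]]]; [intros i Hi; apply H0; right; exact Hi|].
    assert (Ha : A a + B a * t0 < 0 \/ (A a + B a * t0 <= 0 /\ B a < 0)) by (apply H0; left; auto).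
    destruct (Rlt_dec (A a + B a * ts') 0) as [Hn|Hn].
    + exists ts'; split; [exact Hts'|split; [|split]].
      * intros i [<-|Hi]; [lra|auto].
      * intros s Hs i [<-|Hi]; [|auto].
        assert (E : (ts' - t0) * (A a + B a * s) =
                    (ts' - s) * (A a + B a * t0) + (s - t0) * (A a + B a * ts')) by ring.
        destruct Ha as [Ha|[Ha Hb]]; nra.
      * destruct Hdis as [->|[i [Hi1 Hi2]]]; [left; reflexivity|right; exists i; split; [right|]; auto].
    + assert (HB : 0 < B a /\ A a + B a * t0 < 0) by (destruct Ha as [Ha|[Ha Hb]]; nra).
      destruct HB as [HB Ha0].
      set (ts := - A a / B a).
      assert (Ets : B a * ts = - A a) by (unfold ts; field; lra).
      assert (t0 < ts) by (apply (Rmult_lt_reg_l (B a)); lra).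
      assert (ts <= ts') by (apply (Rmult_le_reg_l (B a)); lra).
      exists ts; split; [lra|split; [|split]].
      * intros i [<-|Hi]; [lra|].
        destruct (Rle_lt_or_eq_dec ts ts' ltac:(lra)) as [Hl| ->]; [|auto].
        apply Rlt_le, (Hlt ts); [lra|exact Hi].
      * intros s Hs i [<-|Hi]; [nra|apply (Hlt s); [lra|exact Hi]].
      * right; exists a; split; [left; reflexivity|lra].
Qed.

Lemma nat_argmax (f : nat -> R) n :
  exists k, (k <= n)%nat /\ forall j, (j <= n)%nat -> f j <= f k.
Proof.
  induction n as [|n [k [Hk IH]]].
  - exists 0%nat; split; [lia|intros j Hj; replace j with 0%nat by lia; lra].
  - destruct (Rle_dec (f (S n)) (f k)).
    + exists k; split; [lia|intros j Hj].
      destruct (Nat.eq_dec j (S n)) as [->|]; [assumption|apply IH; lia].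
    + exists (S n); split; [lia|intros j Hj].
      destruct (Nat.eq_dec j (S n)) as [->|]; [lra|specialize (IH j ltac:(lia)); lra].
Qed.

Definition cross (u y : pt) : R := fst u * snd y - snd u * fst y.

Lemma cross_line_centre P V t t' m k m' k' :
  cross V (psub (traj P V t') (centre (m + m') (k + k'))) =
  cross V (psub (traj P V t) (centre m k)) - cross V (centre m' k').
Proof. unfold cross, traj, psub, padd, pscale, centre; simpl; rewrite !plus_IZR; ring. Qed.

(* When [cross u (hvertex j)] is maximal at [j = k], the sides crossed outward in direction
   [u] are [E(k+3)], [E(k+4)], [E(k+5)], and [cross u] of the crossing point, measured from
   [hvertex (k+3)], moves by the exchange with parameters [sector_a k u], [sector_g k u]. *)
Definition sector_sides (k : nat) : edge * edge * edge :=
  match k with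
  | 0 => (E3, E4, E5) | 1 => (E4, E5, E0) | 2 => (E5, E0, E1)
  | 3 => (E0, E1, E2) | 4 => (E1, E2, E3) | _ => (E2, E3, E4)
  end.

Definition sector_a (k : nat) (u : pt) : R :=
  cross u (hvertex ((k + 4) mod 6)) - cross u (hvertex ((k + 3) mod 6)).
Definition sector_g (k : nat) (u : pt) : R :=
  cross u (hvertex k) - cross u (hvertex ((k + 5) mod 6)).
Definition sector_base (k : nat) (u : pt) : R := cross u (hvertex ((k + 3) mod 6)).

Definition sector_piece (k : nat) (e : edge) : piece :=
  let '(e1, e2, _) := sector_sides k in
  if edge_eq_dec e e1 then I1 else if edge_eq_dec e e2 then I2 else I3.

Definition sector_label (k : nat) (i : piece) : letter :=
  let '(e1, e2, e3) := sector_sides k in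
  match i with I1 => side_label e1 | I2 => side_label e2 | I3 => side_label e3 end.

Lemma sector_label_injective k : (k <= 5)%nat ->
  forall i j, sector_label k i = sector_label k j -> i = j.
Proof.
  intros Hk i j; assert (k = 0 \/ k = 1 \/ k = 2 \/ k = 3 \/ k = 4 \/ k = 5)%nat as Hk6 by lia.
  destruct Hk6 as [->|[->|[->|[->|[->| ->]]]]]; destruct i, j; simpl;
    first [reflexivity | discriminate].
Qed.

Ltac sector_cases k Hmax :=
  pose proof (Hmax 0%nat ltac:(lia)); pose proof (Hmax 1%nat ltac:(lia));
  pose proof (Hmax 2%nat ltac:(lia)); pose proof (Hmax 3%nat ltac:(lia));
  pose proof (Hmax 4%nat ltac:(lia)); pose proof (Hmax 5%nat ltac:(lia));
  assert (Hk6 : (k = 0 \/ k = 1 \/ k = 2 \/ k = 3 \/ k = 4 \/ k = 5)%nat) by lia;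
  destruct Hk6 as [->|[->|[->|[->|[->| ->]]]]].

Lemma sector_params_nonneg k u : (k <= 5)%nat ->
  (forall j, (j <= 5)%nat -> cross u (hvertex j) <= cross u (hvertex k)) ->
  0 <= sector_a k u /\ 0 <= sector_g k u.
Proof.
  intros Hk Hmax; destruct u as [a b]; unfold sector_a, sector_g.
  sector_cases k Hmax; unfold cross in *; simpl in *; lra.
Qed.

Lemma sector_exchange_step k u e y : (k <= 5)%nat ->
  (forall j, (j <= 5)%nat -> cross u (hvertex j) <= cross u (hvertex k)) ->
  0 < side_form e u -> on_side e y ->
  exchange_step (sector_a k u) (sector_g k u) (sector_piece k e)
    (cross u y - sector_base k u)
    (cross u y - cross u (centre (neighbour_m e) (neighbour_k e)) - sector_base k u) /\
  side_label e = sector_label k (sector_piece k e).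
Proof.
  intros Hk Hmax Hu He; destruct u as [a b], y as [y1 y2].
  unfold sector_a, sector_g, sector_base, cross, centre in *.
  sector_cases k Hmax; destruct e; simpl in Hu, He |- *; simpl in *;
    try (exfalso; lra); (split; [|reflexivity]);
    first [ assert (y1 = 2 - y2) as -> by lra | assert (y2 = 1) as -> by lra
          | assert (y1 = y2 - 2) as -> by lra | assert (y1 = -2 - y2) as -> by lra
          | assert (y2 = -1) as -> by lra | assert (y1 = 2 + y2) as -> by lra ];
    (split; [split; nra|lra]).
Qed.

Section ChartLine.

Variables (P V : pt) (tau : Z -> R).

Hypothesis V_nonzero : V <> (0, 0).
Hypothesis line_avoids_vertices :
  forall t m k, ~ hexagon_vertex (psub (traj P V t) (centre m k)).
Hypothesis tau_increasing : forall n, tau n < tau (n + 1)%Z.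
Hypothesis tau_all_crossings :
  forall t m k e, on_side e (psub (traj P V t) (centre m k)) -> exists n, tau n = t.

Lemma crossing_exit_side t m k e : on_side e (psub (traj P V t) (centre m k)) ->
  exists m' k' e', side_label e' = side_label e /\ 0 < side_form e' V /\
    on_side e' (psub (traj P V t) (centre m' k')).
Proof.
  intros He; destruct (Rtotal_order 0 (side_form e V)) as [Hpos|[Hzero|Hneg]].
  - exists m, k, e; auto.
  - exfalso; destruct (parallel_to_side_hits_vertex e _ V He (eq_sym Hzero) V_nonzero) as [s Hs].
    apply (line_avoids_vertices (t + s) m k).
    replace (psub (traj P V (t + s)) (centre m k))
      with (padd (psub (traj P V t) (centre m k)) (pscale s V)); [exact Hs|].
    unfold psub, padd, pscale, traj; simpl; f_equal; ring.
  - exists (m + neighbour_m e)%Z, (k + neighbour_k e)%Z, (opp_side e).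
    rewrite side_label_opp, side_form_opp, <- psub_centre.
    split; [reflexivity|split; [lra|apply on_side_neighbour; exact He]].
Qed.

Lemma no_crossing_between n t m k e : tau n < t < tau (n + 1)%Z ->
  ~ on_side e (psub (traj P V t) (centre m k)).
Proof.
  intros Ht He; destruct (tau_all_crossings t m k e He) as [j <-].
  pose proof (increasing_of_succ Rlt Rlt_trans tau tau_increasing) as Hmono.
  destruct (Z.lt_trichotomy j n) as [Hj|[->|Hj]]; [specialize (Hmono j n Hj); lra|lra|].
  destruct (Z.eq_dec j (n + 1)) as [->|]; [lra|specialize (Hmono (n + 1)%Z j ltac:(lia)); lra].
Qed.

Lemma inside_until_next_crossing n m k e :
  side_form e V < 0 -> on_side e (psub (traj P V (tau n)) (centre m k)) ->
  in_hexagon (psub (traj P V (tau (n + 1)%Z)) (centre m k)) /\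
  forall s, tau n < s < tau (n + 1)%Z ->
    forall e', side_form e' (psub (traj P V s) (centre m k)) < side_bound e'.
Proof.
  intros Hin He.
  set (cst := fun e' => side_form e' (psub P (centre m k)) - side_bound e').
  set (slope := fun e' => side_form e' V).
  assert (Hform : forall e' t, cst e' + slope e' * t =
                    side_form e' (psub (traj P V t) (centre m k)) - side_bound e')
    by (intros e' t; unfold cst, slope; rewrite side_form_traj; ring).
  destruct (first_zero_affine all_edges cst slope (tau n) (tau (n + 1)%Z) (tau_increasing n))
    as (ts & Hts & Hle & Hlt & Hstop).
  { intros e' _; rewrite Hform; destruct (on_side_tight _ _ He) as [Hb Hother].
    destruct (edge_eq_dec e' e) as [->|Hne];
      [right; unfold slope; lra|left; specialize (Hother e' Hne); lra]. }
  assert (Hts_in : in_hexagon (psub (traj P V ts) (centre m k)))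
    by (intros e'; specialize (Hle e' (in_all_edges e')); rewrite Hform in Hle; lra).
  assert (Hts_end : ts = tau (n + 1)%Z).
  { destruct Hstop as [|[e' [_ He']]]; [assumption|].
    destruct (Req_dec ts (tau (n + 1)%Z)) as [|Hne]; [assumption|exfalso].
    assert (Htight : side_form e' (psub (traj P V ts) (centre m k)) = side_bound e')
      by (rewrite Hform in He'; lra).
    destruct (hexagon_boundary_cases _ Hts_in (ex_intro _ e' Htight)) as [[e'' He'']|Hv].
    - exact (no_crossing_between n ts m k e'' ltac:(lra) He'').
    - exact (line_avoids_vertices ts m k Hv). }
  rewrite <- Hts_end; split; [exact Hts_in|].
  intros s Hs e'; specialize (Hlt s Hs e' (in_all_edges e')); rewrite Hform in Hlt; lra.
Qed.

Lemma next_exit_hexagon n m0 k0 e0 m1 k1 e1 :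
  0 < side_form e0 V -> on_side e0 (psub (traj P V (tau n)) (centre m0 k0)) ->
  0 < side_form e1 V -> on_side e1 (psub (traj P V (tau (n + 1)%Z)) (centre m1 k1)) ->
  m1 = (m0 + neighbour_m e0)%Z /\ k1 = (k0 + neighbour_k e0)%Z.
Proof.
  intros Hv0 He0 Hv1 He1.
  set (m := (m0 + neighbour_m e0)%Z); set (k := (k0 + neighbour_k e0)%Z).
  destruct (inside_until_next_crossing n m k (opp_side e0)) as [Hin Hinside].
  { rewrite side_form_opp; lra. }
  { unfold m, k; rewrite <- psub_centre; apply on_side_neighbour; exact He0. }
  assert (Hsplit : forall t, psub (traj P V t) (centre m k) =
            psub (psub (traj P V t) (centre m1 k1)) (centre (m - m1) (k - k1)))
    by (intros t; rewrite psub_centre; f_equal; f_equal; lia).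
  rewrite Hsplit in Hin.
  destruct (hexagon_overlap e1 _ _ _ He1 Hin) as [[Hm Hk]|[Hm Hk]]; [split; lia|exfalso].
  (* The line would enter the hexagon [(m, k)] at [tau (n + 1)], yet it is inside just before. *)
  pose proof (on_side_neighbour e1 _ He1) as Hopp; rewrite <- Hm, <- Hk, <- Hsplit in Hopp.
  destruct (on_side_tight _ _ Hopp) as [Hbound _].
  pose proof (tau_increasing n).
  set (s := (tau n + tau (n + 1)%Z) / 2).
  specialize (Hinside s ltac:(unfold s; lra) (opp_side e1)).
  assert (s < tau (n + 1)%Z) by (unfold s; lra).
  rewrite side_form_traj, side_form_opp, side_form_opp in Hinside, Hbound.
  nra.
Qed.

Variable w : word.
Hypothesis crossing_labels : forall n, exists m k e,
  side_label e = w n /\ on_side e (psub (traj P V (tau n)) (centre m k)).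

Lemma chart_line_exchange_coded : exchange_coded w.
Proof.
  assert (Hexit : forall n, exists r : Z * Z * edge,
    side_label (snd r) = w n /\ 0 < side_form (snd r) V /\
    on_side (snd r) (psub (traj P V (tau n)) (centre (fst (fst r)) (snd (fst r))))).
  { intros n; destruct (crossing_labels n) as (m & k & e & Hl & He).
    destruct (crossing_exit_side _ _ _ _ He) as (m' & k' & e' & Hl' & Hv & He').
    exists ((m', k'), e'); simpl; rewrite Hl'; auto. }
  destruct (functional_choice _ Hexit) as [F HF].
  set (cm := fun n => fst (fst (F n))); set (ck := fun n => snd (fst (F n)));
    set (side_at := fun n => snd (F n)).
  assert (Hcentres : forall n, cm (n + 1)%Z = (cm n + neighbour_m (side_at n))%Z /\
                               ck (n + 1)%Z = (ck n + neighbour_k (side_at n))%Z).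
  { intros n; destruct (HF n) as (_ & H1 & H2), (HF (n + 1)%Z) as (_ & H3 & H4).
    exact (next_exit_hexagon n _ _ _ _ _ _ H1 H2 H3 H4). }
  destruct (nat_argmax (fun j => cross V (hvertex j)) 5) as (k & Hk & Hmax).
  exists (sector_label k), (sector_a k V), (sector_g k V), (fun n => sector_piece k (side_at n)),
    (fun n => cross V (psub (traj P V (tau n)) (centre (cm n) (ck n))) - sector_base k V).
  destruct (sector_params_nonneg k V Hk Hmax) as [Ha Hg].
  split; [exact (sector_label_injective k Hk)|split; [split; [exact Ha|split; [exact Hg|]]|]].
  - intros n; destruct (HF n) as (_ & Hv & He); destruct (Hcentres n) as [-> ->].
    rewrite (cross_line_centre P V (tau n)).
    exact (proj1 (sector_exchange_step k V _ _ Hk Hmax Hv He)).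
  - intros n; destruct (HF n) as (Hl & Hv & He); rewrite <- Hl.
    exact (proj2 (sector_exchange_step k V _ _ Hk Hmax Hv He)).
Qed.

End ChartLine.

Theorem mainTheorem6 : forall (p v : pt) (w : word),
  linear_trajectory p v -> cutting_sequence p v w -> infinitely_derivable w.
Proof.
  intros p v w [Hv Hvert] (tau & Hinc & Hon & Hall).
  apply exchange_coded_infinitely_derivable.
  apply (chart_line_exchange_coded (chart p) (chart v) tau).
  - exact (chart_nonzero v Hv).
  - intros t m k H; apply (Hvert t), (tiling_vertex_of_chart _ m k); rewrite chart_traj; exact H.
  - exact Hinc.
  - intros t m k e H; apply (Hall t (side_label e)), (on_edge_of_chart e _ m k).
    rewrite chart_traj; exact H.
  - intros n; rewrite <- chart_traj; exact (on_edge_chart _ _ (Hon n)).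
Qed.
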